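(* In a public goods economy (as in the context), if an outcome $\mathbf{a}$ is Pareto efficient, then every deviation $\mathbf{a}'$ from $\mathbf{a}$ (for any coalition) satisfies $\mathbf{a}'\lneq\mathbf{a}$.
   Context: Agents $N=\{1,\dots,n\}$; outcomes are vectors in $[0,1]^n$. Vector orderings: $\mathbf{x}\ge\mathbf{y}$ means $x_i\ge y_i$ for all $i$; $\mathbf{x}>\mathbf{y}$ means $x_i>y_i$ for all $i$; $\mathbf{x}\gneq\mathbf{y}$ means $\mathbf{x}\ge\mathbf{y}$ and $x_j>y_j$ for some $j$ (and $\mathbf{x}\lneq\mathbf{y}$ means $\mathbf{y}\gneq\mathbf{x}$). For $C\subseteq N$, $\mathbf{v}_C$ is the restriction of $\mathbf{v}$ to coordinates in $C$. The utility function $\mathbf{u}:[0,1]^n\to[0,1]^n$ is continuous, concave, and has positive externalities: whenever $\mathbf{a}\gneq\mathbf{a}'$ and $a_i=a'_i$, then $u_i(\mathbf{a})>u_i(\mathbf{a}')$. A coalition is a nonempty $C\subseteq N$; $\mathbf{a}'$ is a deviation from $\mathbf{a}$ for $C$ if $\mathbf{a}'_{N\setminus C}=\mathbf{0}$ and $\mathbf{u}_C(\mathbf{a}')>\mathbf{u}_C(\mathbf{a})$. $\mathbf{a}$ is Pareto efficient if there is no outcome $\mathbf{a}''$ with $\mathbf{u}(\mathbf{a}'')\gneq\mathbf{u}(\mathbf{a})$. *)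

From HB Require Import structures.
From mathcomp Require Import all_boot all_order all_algebra.
From mathcomp Require Import all_classical all_reals all_analysis.
Set Implicit Arguments. Unset Strict Implicit. Unset Printing Implicit Defensive.
Import Order.TTheory GRing.Theory Num.Theory.
Import numFieldNormedType.Exports.
Local Open Scope ring_scope.
Local Open Scope classical_set_scope.

(* Vectors in R^n are row vectors 'rV[R]_n; coordinate i of x is x ord0 i. *)
Section Defs.
Variables (R : realType) (n : nat).
Implicit Types (x y : 'rV[R]_n).

Definition cube : set 'rV[R]_n := [set x | forall i, 0 <= x ord0 i <= 1].

Definition vge x y := forall i : 'I_n, y ord0 i <= x ord0 i.
Definition vgt x y := forall i : 'I_n, y ord0 i < x ord0 i.
Definition vgneq x y := vge x y /\ exists j : 'I_n, y ord0 j < x ord0 j.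
Definition vlneq x y := vgneq y x.

Definition vgt_on (C : {set 'I_n}) x y := forall i, i \in C -> y ord0 i < x ord0 i.

Definition utility_maps_cube (u : 'rV[R]_n -> 'rV[R]_n) :=
  forall a, cube a -> cube (u a).

Definition utility_continuous (u : 'rV[R]_n -> 'rV[R]_n) :=
  {within cube, continuous u}.

Definition utility_concave (u : 'rV[R]_n -> 'rV[R]_n) :=
  forall a b (t : R), cube a -> cube b -> 0 <= t <= 1 ->
    forall i : 'I_n,
      t * u a ord0 i + (1 - t) * u b ord0 i <= u (t *: a + (1 - t) *: b) ord0 i.

Definition positive_externalities (u : 'rV[R]_n -> 'rV[R]_n) :=
  forall a a', cube a -> cube a' -> vgneq a a' ->
    forall i : 'I_n, a ord0 i = a' ord0 i -> u a' ord0 i < u a ord0 i.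

Definition public_goods_utility (u : 'rV[R]_n -> 'rV[R]_n) :=
  [/\ utility_maps_cube u, utility_continuous u, utility_concave u
    & positive_externalities u].

Definition deviation (u : 'rV[R]_n -> 'rV[R]_n) (C : {set 'I_n}) a a' :=
  [/\ C != finset.set0, cube a',
      (forall i, i \notin C -> a' ord0 i = 0)
    & vgt_on C (u a') (u a)].

Definition pareto_efficient (u : 'rV[R]_n -> 'rV[R]_n) a :=
  cube a /\ ~ exists a'', cube a'' /\ vgneq (u a'') (u a).

End Defs.

(* If a' is a deviation from a Pareto-efficient a and a' exceeded a in some
   coordinate, the joint maximum b = max(a, a') would Pareto-dominate a: on
   coordinates where b agrees with a, positive externalities give u_i(b) > u_i(a);
   where b agrees with a' the coordinate belongs to the coalition, so
   u_i(b) >= u_i(a') > u_i(a).  Hence a' <= a, and a' <> a because the coalition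
   strictly gains at a'. *)
From HB Require Import structures.
From mathcomp Require Import all_boot all_order all_algebra.
From mathcomp Require Import all_classical all_reals all_analysis.
Import Order.TTheory GRing.Theory Num.Theory.
Set Implicit Arguments. Unset Strict Implicit. Unset Printing Implicit Defensive.
Local Open Scope ring_scope.

Section VectorOrder.
Variables (R : realType) (n : nat).
Implicit Types (x y : 'rV[R]_n) (u : 'rV[R]_n -> 'rV[R]_n).

Definition vmax x y : 'rV[R]_n := \row_i Num.max (x ord0 i) (y ord0 i).

Lemma vmaxE x y i : vmax x y ord0 i = Num.max (x ord0 i) (y ord0 i).
Proof. by rewrite mxE. Qed.

Lemma cube_vmax x y : cube x -> cube y -> cube (vmax x y).
Proof.
move=> cx cy i; rewrite vmaxE.
case/andP: (cx i) => x0 x1; case/andP: (cy i) => y0 y1.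
by rewrite le_max ge_max x0 x1 y1.
Qed.

Lemma vge_vmaxl x y : vge (vmax x y) x.
Proof. by move=> i; rewrite vmaxE le_max lexx. Qed.

Lemma vge_vmaxr x y : vge (vmax x y) y.
Proof. by move=> i; rewrite vmaxE le_max lexx orbT. Qed.

Lemma vge_eq_or_vgneq x y : vge x y -> x = y \/ vgneq x y.
Proof.
move=> yx; have [[j yxj]|no_j] := pselect (exists j, y ord0 j < x ord0 j).
  by right; split; last exists j.
left; apply/rowP => i; apply/eqP; rewrite eq_le yx andbT leNgt.
by apply/negP => yxi; apply: no_j; exists i.
Qed.

(* The index [j] only witnesses [n > 0]: for [n = 0], [vgt] holds vacuously. *)
Lemma vgt_vgneq (j : 'I_n) x y : vgt x y -> vgneq x y.
Proof. by move=> yx; split; [move=> i; apply: ltW | exists j]. Qed.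

Lemma positive_externalities_vge u x y i :
  positive_externalities u -> cube x -> cube y -> vge x y ->
  x ord0 i = y ord0 i -> u y ord0 i <= u x ord0 i.
Proof.
move=> pe cx cy /vge_eq_or_vgneq [-> //|yx] xyi.
by apply: ltW; apply: pe.
Qed.

Lemma pareto_deviation_vge u a C a' :
  positive_externalities u -> pareto_efficient u a -> deviation u C a a' ->
  vge a a'.
Proof.
move=> pe [ca not_dominated] [_ ca' outside_C gain_C] k.
rewrite leNgt; apply/negP => ak_lt_a'k.
pose b := vmax a a'.
have cb : cube b by exact: cube_vmax.
have ba : vgneq b a.
  by split; [exact: vge_vmaxl | exists k; rewrite vmaxE lt_max ak_lt_a'k orbT].
have ub_gt_ua : vgt (u b) (u a).
  move=> i; have [a'i_le_ai|ai_lt_a'i] := leP (a' ord0 i) (a ord0 i).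
    by apply: pe => //; rewrite vmaxE max_l.
  have iC : i \in C.
    apply/negPn/negP => /outside_C a'i0; move: ai_lt_a'i; rewrite a'i0.
    by case/andP: (ca i) => ai0 _; rewrite ltNge ai0.
  apply: lt_le_trans (gain_C i iC) _.
  by apply: positive_externalities_vge => //; [exact: vge_vmaxr | rewrite vmaxE max_r ?ltW].
by apply: not_dominated; exists b; split; last exact: (vgt_vgneq k).
Qed.

End VectorOrder.

Theorem lemma1 (R : realType) (n : nat) (u : 'rV[R]_n -> 'rV[R]_n)
  (a : 'rV[R]_n) :
  public_goods_utility u ->
  pareto_efficient u a ->
  forall (C : {set 'I_n}) (a' : 'rV[R]_n), deviation u C a a' -> vlneq a' a.
Proof.
move=> [_ _ _ pe] pa C a' dev.
have [a_eq|//] := vge_eq_or_vgneq (pareto_deviation_vge pe pa dev).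
case: dev => /set0Pn [i iC] _ _ gain_C.
by have := gain_C i iC; rewrite a_eq ltxx.
Qed.
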